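(* Let $A\in \mathbb{R}^{m\times n}$ and $b\in \mathbb{R}^m$ with $m<n$. Suppose that the linear system $Ax=b$ is consistent and has a solution $x_*$. If $x_*$ has more than $\operatorname{rank}(A)$ nonzero entries, then $Ax=b$ has infinitely many solutions with the same sign pattern as $x_*$.
   Context: The sign function is $\operatorname{sign}(r)=1,0,-1$ for $r>0$, $r=0$, $r<0$. Two vectors have the same sign pattern if their entrywise signs agree. *)

From HB Require Import structures.
From mathcomp Require Import all_boot all_order all_algebra.
From mathcomp Require Import boolp classical_sets cardinality reals.
Set Implicit Arguments.
Unset Strict Implicit.
Unset Printing Implicit Defensive.
Import Order.TTheory GRing.Theory Num.Theory.
Local Open Scope ring_scope.

Definition nnz (R : realType) (n : nat) (x : 'cV[R]_n) : nat :=
  #|[set i : 'I_n | x i 0 != 0]|.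

Definition same_sign (R : realType) (n : nat) (x y : 'cV[R]_n) : Prop :=
  forall i : 'I_n, Num.sg (x i 0) = Num.sg (y i 0).

From HB Require Import structures.
From mathcomp Require Import all_boot all_order all_algebra.
From mathcomp Require Import boolp classical_sets cardinality reals.
From mathcomp Require Import lra.

Import Order.TTheory GRing.Theory Num.Theory.
Local Open Scope ring_scope.
Local Open Scope classical_set_scope.

(* The columns of A indexed by the support of x_* are more numerous than
   rank A, hence linearly dependent: this gives a direction d != 0 with
   A d = 0 that vanishes off the support of x_*.  Every x_* + t d solves the
   system, and for small t > 0 the perturbation cannot change the sign of
   any nonzero entry, while the zero entries stay zero. *)

Lemma exists_ker_vector {F : fieldType} {m k} {B : 'M[F]_(m, k)} :
  (\rank B < k)%N -> exists2 v : 'cV[F]_k, v != 0 & B *m v = 0.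
Proof.
move=> rkB; set K := kermx B^T.
have K_neq0 : K != 0.
  by rewrite -mxrank_eq0 mxrank_ker mxrank_tr -lt0n subn_gt0.
exists (nz_row K)^T; first by rewrite trmx_eq0 nz_row_eq0.
apply: trmx_inj; rewrite trmx_mul trmxK trmx0; apply/eqP.
by rewrite -sub_kermx nz_row_sub.
Qed.

Lemma colsub1_mulmxE {F : fieldType} {k n} (g : 'I_k -> 'I_n) (v : 'cV[F]_k) i :
  (colsub g 1%:M *m v) i 0 = \sum_(j | g j == i) v j 0.
Proof.
rewrite mxE [RHS]big_mkcond; apply: eq_bigr => j _.
by rewrite !mxE eq_sym; case: eqP; rewrite ?mul1r ?mul0r.
Qed.

Lemma exists_supported_ker_vector {F : fieldType} {m n} {A : 'M[F]_(m, n)}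
    {S : {set 'I_n}} :
  (\rank A < #|S|)%N ->
  exists d : 'cV[F]_n,
    [/\ d != 0, A *m d = 0 & forall i, i \notin S -> d i 0 = 0].
Proof.
move=> rkA; pose g : 'I_#|S| -> 'I_n := enum_val.
have g_inj : injective g := @enum_val_inj _ _.
have rk_sub : (\rank (colsub g A) < #|S|)%N.
  by rewrite -[A]mulmx1 -mulmx_colsub (leq_ltn_trans (mxrankM_maxl _ _)).
have [v v_neq0 Av] := exists_ker_vector rk_sub.
exists (colsub g 1%:M *m v); split.
- apply: contraNneq v_neq0 => d0; apply/eqP/colP => j.
  have := congr1 (fun d : 'cV_n => d (g j) 0) d0.
  rewrite colsub1_mulmxE (eq_bigl _ _ (fun j' => inj_eq g_inj j' j)).
  by rewrite big_pred1_eq !mxE.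
- by rewrite mulmxA mulmx_colsub mulmx1.
- move=> i iS; rewrite colsub1_mulmxE big_pred0 // => j.
  by apply: contraNF iS => /eqP <-; exact: enum_valP.
Qed.

Lemma sgrD_norm_lt (R : realDomainType) (x e : R) :
  `|e| < `|x| -> Num.sg (x + e) = Num.sg x.
Proof.
case: (ltrgtP x 0) => [x0|x0|->]; last by rewrite normr0 normr_lt0.
- rewrite (ltr0_norm x0) ltr_norml => /andP[h1 h2].
  by rewrite !ltr0_sg //; lra.
- rewrite (gtr0_norm x0) ltr_norml => /andP[h1 h2].
  by rewrite !gtr0_sg //; lra.
Qed.

Lemma same_sign_perturb {R : realType} {n} {x d : 'cV[R]_n} :
  (forall i, x i 0 = 0 -> d i 0 = 0) ->
  exists2 eps : R, 0 < eps & forall t, `|t| < eps -> same_sign (x + t *: d) x.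
Proof.
(* [c] bounds every ratio |d_i| / |x_i| on the support of [x], so for
   |t| < 1 / (1 + c) the perturbation t d_i is smaller than x_i. *)
move=> dS; pose c := \sum_i `|d i 0| / `|x i 0|.
have c_ge0 : 0 <= c by apply: sumr_ge0 => i _; rewrite divr_ge0.
exists (1 + c)^-1; first by rewrite invr_gt0 ltr_wpDr.
move=> t; rewrite -[(1 + c)^-1]mul1r ltr_pdivlMr ?ltr_wpDr // => tc i.
rewrite !mxE.
have [xi0|xi_neq0] := eqVneq (x i 0) 0; first by rewrite dS // mulr0 addr0.
apply: sgrD_norm_lt; have xi_gt0 : 0 < `|x i 0| by rewrite normr_gt0.
have : `|d i 0| <= c * `|x i 0|.
  rewrite -ler_pdivrMr // /c (bigD1 i) //= lerDl.
  by apply: sumr_ge0 => j _; rewrite divr_ge0.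
rewrite normrM; have := normr_ge0 t; nra.
Qed.

Lemma infinite_set_segment {R : realFieldType} {V : lmodType R} (x : V) {d : V}
    {eps : R} {P : set V} :
  d != 0 -> 0 < eps -> (forall t, 0 < t < eps -> P (x + t *: d)) ->
  infinite_set P.
Proof.
move=> d_neq0 eps_gt0 Pseg; pose t (k : nat) := eps / k.+2%:R.
have t_inj : injective t.
  move=> k k' /(mulfI (lt0r_neq0 eps_gt0)) /invr_inj /eqP.
  by rewrite eqr_nat => /eqP [].
have seg_inj : injective (fun k => x + t k *: d).
  move=> k k' /addrI /eqP; rewrite -subr_eq0 -scalerBl scaler_eq0.
  by rewrite (negbTE d_neq0) orbF subr_eq0 => /eqP /t_inj.
move=> Pfin; apply: infinite_nat.
apply: sub_finite_set (finite_preimage (in2W seg_inj) Pfin) => k _; apply: Pseg.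
by rewrite divr_gt0 ?ltr0n //= ltr_pdivrMr ?ltr0n // ltr_pMr // ltr1n.
Qed.

Theorem lemma2p2 (R : realType) (m n : nat) (A : 'M[R]_(m, n)) (b : 'cV[R]_m)
  (xs : 'cV[R]_n) :
  (m < n)%N ->
  A *m xs = b ->
  (\rank A < nnz xs)%N ->
  infinite_set [set y : 'cV[R]_n | A *m y = b /\ same_sign y xs].
Proof.
move=> _ Axs rkA.
have [d [d_neq0 Ad dS]] := exists_supported_ker_vector rkA.
have d_supp i : xs i 0 = 0 -> d i 0 = 0.
  by move=> xi0; apply: dS; rewrite inE xi0 eqxx.
have [eps eps_gt0 sg_xs] := same_sign_perturb d_supp.
apply: (infinite_set_segment xs d_neq0 eps_gt0) => t /andP[t_gt0 t_lt].
split; first by rewrite mulmxDr -scalemxAr Ad scaler0 addr0.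
by apply: sg_xs; rewrite gtr0_norm.
Qed.
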